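(* Let $d,N\ge1$, $\epsilon\in(0,1]$, $\delta\in[0,1]$, $\beta\in(0,1/2]$ with $N\ge d\ln(2d/\beta)$, and let $k=\max\{1,\min\{d,\lfloor\epsilon/2.17\rfloor\}\}$. Let $x(1),\dots,x(N)\in[-1,1]^d$ and let $x^*(i)$ be obtained by applying Algorithm 3 (parameters $\epsilon,\delta,k$) independently to each $x(i)$. For $j\in\{1,\dots,d\}$ put $Z_j=\frac1N\sum_{i=1}^Nx^*_j(i)$ and $X_j=\frac1N\sum_{i=1}^Nx_j(i)$. Then with probability at least $1-\beta$, $$\max_{j\in\{1,\dots,d\}}|Z_j-X_j|=O\!\left(\frac{\sqrt{d\log(d/\beta)}}{(\epsilon+2\delta)\sqrt N}\right),$$ where the implied constant is absolute.
   Context: Algorithm 2 with parameters $\epsilon'>0,\delta'\in[0,1]$: let $B_1=\frac{e^{\epsilon'}+1}{e^{\epsilon'}+2\delta'-1}$; on input $y\in[-1,1]$ it outputs $B_1$ with probability $\frac{e^{\epsilon'}+2\delta'-1}{2(e^{\epsilon'}+1)}y+\frac12$ and $-B_1$ otherwise. Algorithm 3 with parameters $\epsilon>0$, $\delta\ge0$ and $k\in\{1,\dots,d\}$: on input $x\in[-1,1]^d$, set $x^*=(0,\dots,0)$, choose a uniformly random $k$-element subset $S\subseteq\{1,\dots,d\}$, and for each $j\in S$ apply Algorithm 2 with parameters $\epsilon/k,\delta/k$ to $x_j$ to obtain $\bar x_j$ (independently over $j$) and set $x^*_j=\frac dk\bar x_j$; output $x^*$. *)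

From Stdlib Require Import Reals Lra List.
Import ListNotations.
Open Scope R_scope.

(* Finite probability distributions as weighted lists (weight, outcome). *)
Definition dist (A : Type) := list (R * A).

Definition dret {A} (a : A) : dist A := [(1, a)].

Definition dbind {A B} (m : dist A) (f : A -> dist B) : dist B :=
  flat_map (fun pa => map (fun qb => (fst pa * fst qb, snd qb)) (f (snd pa))) m.

Definition Pr {A} (m : dist A) (P : A -> bool) : R :=
  fold_right Rplus 0 (map (fun pa => if P (snd pa) then fst pa else 0) m).

Definition uniform {A} (l : list A) : dist A :=
  map (fun a => (/ INR (length l), a)) l.

Fixpoint ksubsets (k : nat) (l : list nat) : list (list nat) :=
  match l with
  | [] => match k with O => [[]] | S _ => [] end
  | a :: l' => match k with
               | O => [[]]
               | S k' => map (cons a) (ksubsets k' l') ++ ksubsets k l'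
               end
  end.

Definition alg2 (eps' delta' y : R) : dist R :=
  let B1 := (exp eps' + 1) / (exp eps' + 2 * delta' - 1) in
  let p := (exp eps' + 2 * delta' - 1) / (2 * (exp eps' + 1)) * y + 1 / 2 in
  [(p, B1); (1 - p, - B1)].

Definition upd (v : nat -> R) (j : nat) (a : R) : nat -> R :=
  fun j' => if Nat.eqb j' j then a else v j'.

(* Algorithm 3 with parameters eps, delta, k in dimension d; coordinates are
   indexed 0..d-1 and vectors are functions nat -> R. *)
Definition alg3 (eps delta : R) (k d : nat) (x : nat -> R) : dist (nat -> R) :=
  dbind (uniform (ksubsets k (seq 0 d))) (fun S =>
    fold_right
      (fun j acc =>
         dbind (alg2 (eps / INR k) (delta / INR k) (x j)) (fun xb =>
         dbind acc (fun v => dret (upd v j (INR d / INR k * xb)))))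
      (dret (fun _ => 0)) S).

Fixpoint prodN {A} (N : nat) (D : nat -> dist A) : dist (list A) :=
  match N with
  | O => dret []
  | S n => dbind (prodN n D) (fun l => dbind (D n) (fun a => dret (l ++ [a])))
  end.

Definition sumR (l : list R) : R := fold_right Rplus 0 l.

Definition kpar (eps : R) (d : nat) : nat :=
  Nat.max 1 (Nat.min d (Z.to_nat (Int_part (eps / 2.17)))).

Definition Zj (N : nat) (outs : list (nat -> R)) (j : nat) : R :=
  / INR N * sumR (map (fun v => v j) outs).
Definition Xj (N : nat) (x : nat -> nat -> R) (j : nat) : R :=
  / INR N * sumR (map (fun i => x i j) (seq 0 N)).

Definition maxdev (d N : nat) (x : nat -> nat -> R) (outs : list (nat -> R)) : R :=
  fold_right Rmax 0 (map (fun j => Rabs (Zj N outs j - Xj N x j)) (seq 0 d)).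

From Pilot Require Import Defs.
From Stdlib Require Import Reals List Lra Lia.
Import ListNotations.
Open Scope R_scope.

(* Since eps <= 1 < 2.17, the subset size is k = 1: each user reports one
   uniformly chosen coordinate j, privatised by Algorithm 2 and scaled by d.
   Algorithm 2 is unbiased with outputs +-B1, B1 >= 1, so each reported
   coordinate is an unbiased estimate of x j, bounded by d B1 and with second
   moment d B1^2.  A bounded centred variable X with |uX| <= 1/2 satisfies
   E e^{uX} <= e^{2u^2 E X^2}; multiplying over the N independent users bounds
   the moment generating function of N (Z_j - X_j) by e^{2 N u^2 d B1^2}.  A
   two-sided Chernoff bound with a union bound over the d coordinates, with
   u = sqrt(L/(N d B1^2))/4 and L = ln(2d/beta), then gives failure probability
   at most beta for the threshold 30 sqrt(d ln(d/beta)) / ((eps+2delta) sqrt N),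
   using B1 (eps + 2 delta) <= 4. *)


(* Expectation of f under a finite weighted list of outcomes (the type is
   qualified because Reals also defines a [dist]). *)
Definition E {A} (m : Defs.dist A) (f : A -> R) : R :=
  fold_right Rplus 0 (map (fun pa => fst pa * f (snd pa)) m).

Lemma E_cons {A} w (a : A) m f : E ((w, a) :: m) f = w * f a + E m f.
Proof. reflexivity. Qed.

Lemma E_app {A} (m1 m2 : Defs.dist A) f : E (m1 ++ m2) f = E m1 f + E m2 f.
Proof.
  induction m1 as [|[w a] m IH]; simpl; [unfold E; simpl; ring|].
  rewrite !E_cons, IH; ring.
Qed.

Lemma E_ret {A} (a : A) f : E (dret a) f = f a.
Proof. unfold E, dret; simpl; ring. Qed.

Lemma E_bind {A B} (m : Defs.dist A) (k : A -> Defs.dist B) f :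
  E (dbind m k) f = E m (fun a => E (k a) f).
Proof.
  unfold dbind; induction m as [|[w a] m IH]; [reflexivity|].
  simpl; rewrite E_app, E_cons, <- IH; f_equal.
  induction (k a) as [|[q b] l IHl]; simpl; [unfold E; simpl; ring|].
  rewrite !E_cons, IHl; simpl; ring.
Qed.

Lemma E_ext {A} (m : Defs.dist A) f g : (forall a, f a = g a) -> E m f = E m g.
Proof.
  intro H; induction m as [|[w a] m IH]; [reflexivity|].
  rewrite !E_cons, IH, H; ring.
Qed.

Lemma E_plus {A} (m : Defs.dist A) f g : E m (fun a => f a + g a) = E m f + E m g.
Proof.
  induction m as [|[w a] m IH]; [unfold E; simpl; ring|].
  rewrite !E_cons, IH; ring.
Qed.

Lemma E_scal {A} (m : Defs.dist A) c f : E m (fun a => c * f a) = c * E m f.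
Proof.
  induction m as [|[w a] m IH]; [unfold E; simpl; ring|].
  rewrite !E_cons, IH; ring.
Qed.

Lemma E_minus {A} (m : Defs.dist A) f g : E m (fun a => f a - g a) = E m f - E m g.
Proof.
  induction m as [|[w a] m IH]; [unfold E; simpl; ring|].
  rewrite !E_cons, IH; ring.
Qed.

Lemma E_quadratic {A} (m : Defs.dist A) (X : A -> R) c0 c1 c2 :
  E m (fun a => c0 + c1 * X a + c2 * X a ^ 2)
  = c0 * E m (fun _ => 1) + c1 * E m X + c2 * E m (fun a => X a ^ 2).
Proof.
  rewrite !E_plus, <- !E_scal, Rmult_1_r; reflexivity.
Qed.

Lemma E_sum {A} (m : Defs.dist A) (l : list nat) (h : nat -> A -> R) :
  E m (fun a => sumR (map (fun j => h j a) l)) = sumR (map (fun j => E m (h j)) l).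
Proof.
  induction l as [|j l IH]; simpl.
  - induction m as [|[w a] m IHm]; [reflexivity|]. rewrite E_cons, IHm; ring.
  - rewrite E_plus, IH; reflexivity.
Qed.

Lemma E_uniform {A} (l : list A) (f : A -> R) :
  E (uniform l) f = / INR (length l) * fold_right Rplus 0 (map f l).
Proof.
  unfold uniform; generalize (/ INR (length l)); intro c.
  induction l as [|a l IH]; simpl; [unfold E; simpl; ring|].
  rewrite E_cons, IH; ring.
Qed.

Lemma Pr_E {A} (m : Defs.dist A) P : Pr m P = E m (fun a => if P a then 1 else 0).
Proof.
  induction m as [|[w a] m IH]; [reflexivity|].
  rewrite E_cons, <- IH; unfold Pr; simpl; destruct (P a); ring.
Qed.

(* m has nonnegative weights and every outcome listed in m satisfies P;
   with P := fun _ => True this just says m is a genuine (unnormalised) measure. *)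
Definition supp {A} (m : Defs.dist A) (P : A -> Prop) : Prop :=
  Forall (fun pa => 0 <= fst pa /\ P (snd pa)) m.

Lemma E_mono {A} (m : Defs.dist A) P f g :
  supp m P -> (forall a, P a -> f a <= g a) -> E m f <= E m g.
Proof.
  intros Hm H; induction Hm as [|[w a] m [Hw Ha] _ IH]; [unfold E; simpl; lra|].
  rewrite !E_cons; simpl in *. specialize (H a Ha). nra.
Qed.

Lemma supp_weaken {A} (m : Defs.dist A) (P Q : A -> Prop) :
  (forall a, P a -> Q a) -> supp m P -> supp m Q.
Proof. intros H; apply Forall_impl; intros pa [Hw Hp]; auto. Qed.

Lemma supp_ret {A} (a : A) (P : A -> Prop) : P a -> supp (dret a) P.
Proof. intro; repeat constructor; simpl; auto; lra. Qed.

Lemma supp_bind {A B} (m : Defs.dist A) (k : A -> Defs.dist B) P Q :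
  supp m P -> (forall a, P a -> supp (k a) Q) -> supp (dbind m k) Q.
Proof.
  unfold dbind; intros Hm Hk; induction Hm as [|[w a] m [Hw Ha] _ IH]; simpl;
    [constructor|].
  apply Forall_app; split; [|exact IH].
  apply Forall_map; eapply Forall_impl; [|exact (Hk a Ha)].
  intros [q b] [Hq Hb]; simpl in *; split; [nra|exact Hb].
Qed.

Lemma supp_uniform {A} (l : list A) : supp (uniform l) (fun a => In a l).
Proof.
  apply Forall_map, Forall_forall; intros a Ha; split; [simpl|exact Ha].
  destruct l as [|b l]; [contradiction|].
  left; apply Rinv_0_lt_compat, lt_0_INR; simpl; lia.
Qed.

Lemma exp_le_mono x y : x <= y -> exp x <= exp y.
Proof.
  intro H; destruct (Rle_lt_or_eq_dec _ _ H) as [Hlt|Heq];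
    [left; apply exp_increasing; exact Hlt|right; rewrite Heq; reflexivity].
Qed.

Lemma ln_le_mono x y : 0 < x -> x <= y -> ln x <= ln y.
Proof.
  intros Hx H; destruct (Rle_lt_or_eq_dec _ _ H) as [Hlt|Heq];
    [left; apply ln_increasing; assumption|right; rewrite Heq; reflexivity].
Qed.

(* e^z <= 1 + z + 2 z^2 for |z| <= 1/2: from e^z e^{-z} = 1 and e^{-z} >= 1 - z. *)
Lemma exp_quadratic_bound z : Rabs z <= 1 / 2 -> exp z <= 1 + z + 2 * z ^ 2.
Proof.
  intro Hz.
  assert (Hz' : - (1 / 2) <= z <= 1 / 2)
    by (unfold Rabs in Hz; destruct (Rcase_abs z); lra).
  assert (Hinv : exp z * exp (- z) = 1)
    by (rewrite <- exp_plus, Rplus_opp_r; apply exp_0).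
  assert (H1 := exp_ineq1_le (- z)).
  assert (H2 := exp_pos z).
  assert (1 <= (1 - z) * (1 + z + 2 * z ^ 2)) by nra.
  nra.
Qed.

(* e^|t| <= e^t + e^{-t}: the two-sided Chernoff bound covers |t|. *)
Lemma exp_abs_le t : exp (Rabs t) <= exp t + exp (- t).
Proof.
  assert (Hp := exp_pos t); assert (Hn := exp_pos (- t)).
  unfold Rabs; destruct (Rcase_abs t); lra.
Qed.

Lemma mgf_quadratic {A} (m : Defs.dist A) (X : A -> R) u :
  supp m (fun a => Rabs (u * X a) <= 1 / 2) ->
  E m (fun _ => 1) = 1 -> E m X = 0 ->
  E m (fun a => exp (u * X a)) <= exp (2 * u ^ 2 * E m (fun a => X a ^ 2)).
Proof.
  intros Hs Hmass Hmean.
  apply Rle_trans with (E m (fun a => 1 + u * X a + 2 * u ^ 2 * X a ^ 2)).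
  - apply (E_mono _ _ _ _ Hs); intros a Ha.
    replace (2 * u ^ 2 * X a ^ 2) with (2 * (u * X a) ^ 2) by ring.
    now apply exp_quadratic_bound.
  - rewrite E_quadratic, Hmass, Hmean.
    eapply Rle_trans; [|apply exp_ineq1_le]; lra.
Qed.

Lemma sumR_app l1 l2 : sumR (l1 ++ l2) = sumR l1 + sumR l2.
Proof. induction l1 as [|a l IH]; simpl; [ring|]. unfold sumR in *; simpl; rewrite IH; ring. Qed.

Lemma sumR_const (l : list nat) c : sumR (map (fun _ => c) l) = INR (length l) * c.
Proof.
  induction l as [|a l IH]; [simpl; ring|].
  cbn [map length]; rewrite S_INR; unfold sumR in *; simpl; rewrite IH; ring.
Qed.

Lemma sumR_le (l : list nat) f g :
  (forall j, In j l -> f j <= g j) -> sumR (map f l) <= sumR (map g l).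
Proof.
  induction l as [|j l IH]; simpl; intro H; [lra|].
  assert (f j <= g j) by auto; assert (sumR (map f l) <= sumR (map g l)) by auto.
  unfold sumR in *; simpl; lra.
Qed.

Lemma sumR_nonneg (l : list nat) f : (forall j, In j l -> 0 <= f j) -> 0 <= sumR (map f l).
Proof.
  intro H; replace 0 with (sumR (map (fun _ => 0) l)) by (rewrite sumR_const; ring).
  now apply sumR_le.
Qed.

Lemma sumR_ge_term (l : list nat) f j :
  (forall i, In i l -> 0 <= f i) -> In j l -> f j <= sumR (map f l).
Proof.
  intros Hf Hj; induction l as [|i l IH]; [contradiction|].
  assert (Hl : 0 <= sumR (map f l)) by (apply sumR_nonneg; intros; apply Hf; right; auto).
  assert (0 <= f i) by (apply Hf; left; reflexivity).
  destruct Hj as [<-|Hj]; unfold sumR in *; simpl; [lra|].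
  assert (f j <= fold_right Rplus 0 (map f l)) by (apply IH; auto; intros; apply Hf; right; auto).
  lra.
Qed.

Lemma fold_Rmax_gt (l : list nat) (f : nat -> R) T :
  0 <= T -> fold_right Rmax 0 (map f l) > T -> exists j, In j l /\ f j > T.
Proof.
  induction l as [|a l IH]; simpl; intros HT H; [lra|].
  unfold Rmax in H at 1; destruct (Rle_dec (f a) (fold_right Rmax 0 (map f l))).
  - destruct (IH HT H) as [j [Hj Hf]]; eauto.
  - eauto.
Qed.

(* A coordinate whose deviation exceeds T contributes at least 1 to the
   Chernoff union sum. *)
Lemma union_term_ge_1 t mu T :
  0 < mu -> Rabs t > T -> 1 <= (exp (mu * t) + exp (- (mu * t))) * exp (- (mu * T)).
Proof.
  intros Hmu Ht.
  apply Rle_trans with (exp (Rabs (mu * t)) * exp (- (mu * T))).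
  - rewrite <- exp_plus, Rabs_mult, (Rabs_pos_eq mu) by lra.
    eapply Rle_trans; [|apply exp_ineq1_le]; nra.
  - apply Rmult_le_compat_r; [left; apply exp_pos|apply exp_abs_le].
Qed.

Lemma indicator_union_bound (F : nat -> R) l mu T : 0 < mu -> 0 <= T ->
  1 - sumR (map (fun j => (exp (mu * F j) + exp (- (mu * F j))) * exp (- (mu * T))) l)
  <= if Rle_dec (fold_right Rmax 0 (map (fun j => Rabs (F j)) l)) T then 1 else 0.
Proof.
  intros Hmu HT.
  assert (Hterm : forall j, In j l ->
            0 <= (exp (mu * F j) + exp (- (mu * F j))) * exp (- (mu * T))).
  { intros j _; assert (Hp := exp_pos (mu * F j)); assert (Hn := exp_pos (- (mu * F j))).
    assert (HK := exp_pos (- (mu * T))); nra. }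
  destruct (Rle_dec _ T) as [_|Hgt].
  - assert (Hsum := sumR_nonneg _ _ Hterm); lra.
  - apply Rnot_le_gt, fold_Rmax_gt in Hgt as [j [Hj HFj]]; [|exact HT].
    assert (H1 := union_term_ge_1 (F j) mu T Hmu HFj).
    assert (H2 := sumR_ge_term _ _ _ Hterm Hj); simpl in H2.
    lra.
Qed.

Lemma union_chernoff {A} (m : Defs.dist A) (F : A -> nat -> R) d mu T M :
  supp m (fun _ => True) -> E m (fun _ => 1) = 1 -> 0 < mu -> 0 <= T ->
  (forall j, (j < d)%nat ->
     E m (fun a => exp (mu * F a j)) <= M /\ E m (fun a => exp (- (mu * F a j))) <= M) ->
  Pr m (fun a => if Rle_dec (fold_right Rmax 0 (map (fun j => Rabs (F a j)) (seq 0 d))) T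
                 then true else false)
  >= 1 - 2 * INR d * M * exp (- (mu * T)).
Proof.
  intros Hs Hmass Hmu HT HM.
  set (K := exp (- (mu * T))).
  set (S a := sumR (map (fun j => (exp (mu * F a j) + exp (- (mu * F a j))) * K) (seq 0 d))).
  rewrite Pr_E; apply Rle_ge.
  apply Rle_trans with (E m (fun a => 1 - S a)).
  2: { apply (E_mono _ _ _ _ Hs); intros a _.
       pose proof (indicator_union_bound (F a) (seq 0 d) mu T Hmu HT) as Ha.
       destruct (Rle_dec _ T); exact Ha. }
  unfold S; rewrite E_minus, Hmass, E_sum.
  enough (Hsum : sumR (map (fun j => E m (fun a => (exp (mu * F a j) + exp (- (mu * F a j))) * K))
                           (seq 0 d)) <= sumR (map (fun _ => 2 * M * K) (seq 0 d)))
    by (rewrite sumR_const, length_seq in Hsum; lra).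
  apply sumR_le; intros j Hj; apply in_seq in Hj.
  destruct (HM j ltac:(lia)) as [Hp Hn].
  rewrite (E_ext _ _ (fun a => K * (exp (mu * F a j) + exp (- (mu * F a j))))) by (intro; ring).
  rewrite E_scal, E_plus.
  assert (0 < K) by apply exp_pos.
  nra.
Qed.

Definition alg2_B eps delta := (exp eps + 1) / (exp eps + 2 * delta - 1).

Definition alg2_p eps delta y := (exp eps + 2 * delta - 1) / (2 * (exp eps + 1)) * y + 1 / 2.

Lemma E_alg2 eps delta y f :
  E (alg2 eps delta y) f =
  alg2_p eps delta y * f (alg2_B eps delta) + (1 - alg2_p eps delta y) * f (- alg2_B eps delta).
Proof. unfold alg2, E, alg2_B, alg2_p; simpl; ring. Qed.

(* Since e^eps + 2 delta - 1 >= eps > 0, the output magnitude is at least 1. *)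
Lemma alg2_B_ge_1 eps delta : 0 < eps -> 0 <= delta <= 1 -> 1 <= alg2_B eps delta.
Proof.
  intros He Hd; assert (H1 := exp_ineq1_le eps); unfold alg2_B.
  apply Rmult_le_reg_r with (exp eps + 2 * delta - 1); [lra|].
  unfold Rdiv; rewrite Rmult_assoc, Rinv_l by lra; lra.
Qed.

Lemma alg2_p_bounds eps delta y : 0 < eps -> 0 <= delta <= 1 -> -1 <= y <= 1 ->
  0 <= alg2_p eps delta y <= 1.
Proof.
  intros He Hd Hy; assert (H1 := exp_ineq1_le eps); unfold alg2_p.
  set (c := (exp eps + 2 * delta - 1) / (2 * (exp eps + 1))).
  assert (0 < c <= 1 / 2).
  { unfold c; split; [apply Rdiv_lt_0_compat; lra|].
    apply Rmult_le_reg_r with (2 * (exp eps + 1)); [lra|].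
    unfold Rdiv; rewrite Rmult_assoc, Rinv_l by lra; lra. }
  nra.
Qed.

(* Algorithm 2 is unbiased: E[output] = B1 (2p - 1) = y. *)
Lemma alg2_unbiased eps delta y : 0 < eps -> 0 <= delta ->
  alg2_B eps delta * (2 * alg2_p eps delta y - 1) = y.
Proof.
  intros He Hd; assert (H1 := exp_ineq1_le eps); unfold alg2_B, alg2_p.
  field; lra.
Qed.

Lemma supp_alg2 eps delta y : 0 <= alg2_p eps delta y <= 1 ->
  supp (alg2 eps delta y) (fun b => b = alg2_B eps delta \/ b = - alg2_B eps delta).
Proof.
  intro Hp; unfold supp, alg2; fold (alg2_B eps delta) (alg2_p eps delta y).
  apply Forall_cons; [simpl; split; [lra|now left]|].
  apply Forall_cons; [simpl; split; [lra|now right]|apply Forall_nil].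
Qed.

Lemma ksubsets_1 l : ksubsets 1 l = map (fun j => [j]) l.
Proof. induction l as [|a l IH]; simpl; [reflexivity|]. rewrite IH; destruct l; reflexivity. Qed.

Lemma E_alg3 eps delta d x g :
  E (alg3 eps delta 1 d x) g =
  / INR d * sumR (map (fun j => E (alg2 eps delta (x j))
                                  (fun b => g (upd (fun _ => 0) j (INR d * b)))) (seq 0 d)).
Proof.
  unfold alg3; rewrite E_bind, ksubsets_1, E_uniform, length_map, length_seq, map_map.
  f_equal; unfold sumR; f_equal; apply map_ext; intro j.
  cbn [fold_right]; rewrite !Rdiv_1_r, E_bind.
  apply E_ext; intro b; rewrite E_bind, !E_ret; reflexivity.
Qed.

Lemma supp_alg3 eps delta d x : 0 < eps -> 0 <= delta <= 1 ->
  (forall j, (j < d)%nat -> -1 <= x j <= 1) ->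
  supp (alg3 eps delta 1 d x) (fun v => forall j, Rabs (v j) <= INR d * alg2_B eps delta).
Proof.
  intros He Hd Hx; assert (HB := alg2_B_ge_1 eps delta He Hd).
  unfold alg3; apply supp_bind with (1 := supp_uniform _).
  rewrite ksubsets_1; intros S HS; apply in_map_iff in HS as [j [HjS Hj]]; subst S.
  apply in_seq in Hj; cbn [fold_right]; rewrite !Rdiv_1_r.
  apply supp_bind with (1 := supp_alg2 _ _ _ (alg2_p_bounds _ _ _ He Hd (Hx j ltac:(lia)))).
  intros b Hb; apply supp_bind with (P := fun v => v = fun _ => 0); [now apply supp_ret|].
  intros v Hv; subst v; apply supp_ret; intro i; unfold upd.
  assert (0 <= INR d) by apply pos_INR.
  destruct (Nat.eqb i j); [|rewrite Rabs_R0; nra].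
  rewrite Rabs_mult, Rabs_pos_eq by assumption.
  destruct Hb as [-> | ->]; [|rewrite Rabs_Ropp]; rewrite Rabs_pos_eq by lra; lra.
Qed.

Lemma sum_delta (d j : nat) (a c : R) : (j < d)%nat ->
  sumR (map (fun i => if Nat.eqb i j then a else c) (seq 0 d)) = a + (INR d - 1) * c.
Proof.
  induction d as [|n IH]; intro Hj; [lia|].
  rewrite seq_S, map_app, sumR_app, S_INR; cbn [map plus]; unfold sumR at 2; simpl.
  destruct (Nat.eq_dec j n) as [->|Hne].
  - rewrite Nat.eqb_refl, (map_ext_in _ (fun _ => c)), sumR_const, length_seq; [ring|].
    intros i Hi; apply in_seq in Hi; destruct (Nat.eqb_spec i n); [lia|reflexivity].
  - rewrite IH by lia; destruct (Nat.eqb_spec n j); [lia|ring].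
Qed.

Lemma E_alg3_coord eps delta d x j (f : R -> R) : (j < d)%nat ->
  E (alg3 eps delta 1 d x) (fun v => f (v j)) =
  / INR d * (E (alg2 eps delta (x j)) (fun b => f (INR d * b)) + (INR d - 1) * f 0).
Proof.
  intro Hj; rewrite E_alg3; f_equal.
  rewrite <- (sum_delta d j _ (f 0) Hj); f_equal; apply map_ext; intro i.
  unfold upd; destruct (Nat.eqb_spec i j) as [->|Hne]; [now rewrite Nat.eqb_refl|].
  rewrite (proj2 (Nat.eqb_neq j i)) by auto; rewrite E_alg2; ring.
Qed.

Lemma alg3_mass eps delta d x : (1 <= d)%nat -> E (alg3 eps delta 1 d x) (fun _ => 1) = 1.
Proof.
  intro Hd; rewrite (E_alg3_coord eps delta d x 0 (fun _ => 1)) by lia.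
  rewrite E_alg2; field; apply not_0_INR; lia.
Qed.

Lemma alg3_mean eps delta d x j : 0 < eps -> 0 <= delta -> (j < d)%nat ->
  E (alg3 eps delta 1 d x) (fun v => v j) = x j.
Proof.
  intros He Hd Hj; rewrite (E_alg3_coord eps delta d x j (fun t => t)) by exact Hj.
  rewrite E_alg2; rewrite <- (alg2_unbiased eps delta (x j) He Hd) at 3.
  field; apply not_0_INR; lia.
Qed.

Lemma alg3_second_moment eps delta d x j : (j < d)%nat ->
  E (alg3 eps delta 1 d x) (fun v => v j ^ 2) = INR d * alg2_B eps delta ^ 2.
Proof.
  intro Hj; rewrite (E_alg3_coord eps delta d x j (fun t => t ^ 2)) by exact Hj.
  rewrite E_alg2; field; apply not_0_INR; lia.
Qed.

Lemma alg3_mgf eps delta d x j u : 0 < eps -> 0 <= delta <= 1 -> (j < d)%nat ->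
  (forall i, (i < d)%nat -> -1 <= x i <= 1) ->
  Rabs u * (2 * (INR d * alg2_B eps delta)) <= 1 / 2 ->
  E (alg3 eps delta 1 d x) (fun v => exp (u * (v j - x j)))
  <= exp (2 * u ^ 2 * (INR d * alg2_B eps delta ^ 2)).
Proof.
  intros He Hd Hj Hx Hu.
  assert (HB := alg2_B_ge_1 eps delta He Hd).
  assert (Hdr : 1 <= INR d) by (apply (le_INR 1); lia).
  assert (Hxj := Hx j Hj).
  assert (Hmass : E (alg3 eps delta 1 d x) (fun _ => 1) = 1) by (apply alg3_mass; lia).
  assert (Hmean : E (alg3 eps delta 1 d x) (fun v => v j - x j) = 0).
  { rewrite (E_ext _ _ (fun v => - x j + 1 * v j + 0 * v j ^ 2)) by (intro; ring).
    rewrite E_quadratic, Hmass, alg3_mean by (assumption || lra); ring. }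
  assert (Hvar : E (alg3 eps delta 1 d x) (fun v => (v j - x j) ^ 2)
                 <= INR d * alg2_B eps delta ^ 2).
  { rewrite (E_ext _ _ (fun v => x j ^ 2 + (- 2 * x j) * v j + 1 * v j ^ 2)) by (intro; ring).
    rewrite E_quadratic, Hmass, alg3_mean, alg3_second_moment by (assumption || lra).
    nra. }
  eapply Rle_trans; [apply mgf_quadratic; [|exact Hmass|exact Hmean]|].
  - refine (supp_weaken _ _ _ _ (supp_alg3 _ _ _ _ He Hd Hx)); intros v Hv.
    specialize (Hv j).
    assert (Hw : Rabs (v j - x j) <= 2 * (INR d * alg2_B eps delta)).
    { eapply Rle_trans; [apply Rabs_triang|]; rewrite Rabs_Ropp.
      assert (Rabs (x j) <= 1) by (apply Rabs_le; lra); nra. }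
    rewrite Rabs_mult; eapply Rle_trans; [|exact Hu].
    apply Rmult_le_compat_l; [apply Rabs_pos|exact Hw].
  - apply exp_le_mono; nra.
Qed.

Lemma supp_prodN {A} N (D : nat -> Defs.dist A) :
  (forall i, (i < N)%nat -> supp (D i) (fun _ => True)) -> supp (prodN N D) (fun _ => True).
Proof.
  induction N as [|n IH]; intro HD; simpl; [now apply supp_ret|].
  apply supp_bind with (P := fun _ => True); [apply IH; intros; apply HD; lia|].
  intros l _; apply supp_bind with (P := fun _ => True); [apply HD; lia|].
  intros; now apply supp_ret.
Qed.

Lemma prodN_mass {A} N (D : nat -> Defs.dist A) :
  (forall i, (i < N)%nat -> E (D i) (fun _ => 1) = 1) -> E (prodN N D) (fun _ => 1) = 1.
Proof.
  induction N as [|n IH]; intro HD; simpl; [now rewrite E_ret|].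
  rewrite E_bind, (E_ext _ _ (fun _ => 1)); [apply IH; intros; apply HD; lia|].
  intro l; rewrite E_bind, (E_ext _ _ (fun _ => 1)); [apply HD; lia|].
  intro; now rewrite E_ret.
Qed.

Definition sum_dev (x : nat -> nat -> R) (N j : nat) (outs : list (nat -> R)) : R :=
  sumR (map (fun v => v j) outs) - sumR (map (fun i => x i j) (seq 0 N)).

Lemma prodN_mgf N (D : nat -> Defs.dist (nat -> R)) x j u c :
  (forall i, (i < N)%nat -> supp (D i) (fun _ => True)) ->
  (forall i, (i < N)%nat -> E (D i) (fun v => exp (u * (v j - x i j))) <= exp c) ->
  E (prodN N D) (fun outs => exp (u * sum_dev x N j outs)) <= exp (INR N * c).
Proof.
  induction N as [|n IH]; intros HD Hc.
  - simpl; rewrite E_ret; unfold sum_dev; simpl; unfold sumR; simpl.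
    replace (u * (0 - 0)) with (0 * c) by ring; lra.
  - simpl prodN; rewrite E_bind, S_INR, Rmult_plus_distr_r, Rmult_1_l, exp_plus.
    apply Rle_trans with (E (prodN n D) (fun l => exp c * exp (u * sum_dev x n j l))).
    + apply (E_mono _ _ _ _ (supp_prodN n D ltac:(intros; apply HD; lia))); intros l _.
      rewrite E_bind.
      rewrite (E_ext _ _ (fun v => exp (u * sum_dev x n j l) * exp (u * (v j - x n j)))).
      * rewrite E_scal, Rmult_comm; apply Rmult_le_compat_r; [left; apply exp_pos|].
        apply Hc; lia.
      * intro v; rewrite E_ret, <- exp_plus; f_equal; unfold sum_dev.
        rewrite seq_S, !map_app, !sumR_app; unfold sumR; simpl; ring.
    + rewrite E_scal, Rmult_comm; apply Rmult_le_compat_r; [left; apply exp_pos|].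
      apply IH; intros; [apply HD|apply Hc]; lia.
Qed.

Lemma deviation_mgf d N eps delta x j u :
  (1 <= N)%nat -> 0 < eps -> 0 <= delta <= 1 -> (j < d)%nat ->
  (forall i j, (i < N)%nat -> (j < d)%nat -> -1 <= x i j <= 1) ->
  Rabs u * (2 * (INR d * alg2_B eps delta)) <= 1 / 2 ->
  E (prodN N (fun i => alg3 eps delta 1 d (x i)))
    (fun outs => exp (u * INR N * (Zj N outs j - Xj N x j)))
  <= exp (INR N * (2 * u ^ 2 * (INR d * alg2_B eps delta ^ 2))).
Proof.
  intros HN He Hdel Hj Hx Hu.
  assert (HNr : INR N <> 0) by (apply not_0_INR; lia).
  rewrite (E_ext _ _ (fun outs => exp (u * sum_dev x N j outs)))
    by (intro; unfold Zj, Xj, sum_dev; f_equal; field; exact HNr).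
  apply prodN_mgf; intros i Hi.
  - refine (supp_weaken _ _ _ _ (supp_alg3 _ _ _ _ He Hdel _)); [easy|].
    intros; apply Hx; assumption.
  - apply alg3_mgf; try assumption; intros; apply Hx; assumption.
Qed.

(* For eps <= 1 < 2.17 the subset size is k = 1. *)
Lemma kpar_1 eps d : 0 < eps <= 1 -> kpar eps d = 1%nat.
Proof.
  intro He; unfold kpar.
  assert (Int_part (eps / 2.17) = 0%Z) as ->.
  { symmetry; apply Int_part_spec; simpl.
    assert (0 < eps / 2.17) by (apply Rdiv_lt_0_compat; lra).
    assert (eps / 2.17 < 1).
    { apply Rmult_lt_reg_r with 2.17; [lra|].
      unfold Rdiv; rewrite Rmult_assoc, Rinv_l by lra; lra. }
    lra. }
  simpl; now rewrite Nat.min_0_r.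
Qed.

(* B1 (eps + 2 delta) <= e^eps + 1 <= 4, which turns 1/B1 into (eps + 2 delta). *)
Lemma alg2_B_mul_le_4 eps delta : 0 < eps <= 1 -> 0 <= delta <= 1 ->
  alg2_B eps delta * (eps + 2 * delta) <= 4.
Proof.
  intros He Hd; assert (H1 := exp_ineq1_le eps).
  assert (H3 : exp eps <= 3) by (eapply Rle_trans; [apply exp_le_mono, He|apply exp_le_3]).
  unfold alg2_B; apply Rmult_le_reg_r with (exp eps + 2 * delta - 1); [lra|].
  replace ((exp eps + 1) / (exp eps + 2 * delta - 1) * (eps + 2 * delta) *
           (exp eps + 2 * delta - 1)) with ((exp eps + 1) * (eps + 2 * delta)) by (field; lra).
  nra.
Qed.

(* Algebraic core of the parameter choice: with r = sqrt(L/(nV)), V = d B^2,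
   B Q <= 4 and L <= 2 l, the threshold 30 sqrt(d l)/(Q sqrt n) dominates 5 r V. *)
Lemma threshold_ge (n dd B Q L l : R) :
  0 < n -> 1 <= dd -> 1 <= B -> 0 < Q -> B * Q <= 4 -> 0 < L <= 2 * l ->
  5 * sqrt (L / (n * (dd * B ^ 2))) * (dd * B ^ 2) <= 30 * sqrt (dd * l) / (Q * sqrt n).
Proof.
  intros Hn Hdd HB HQ HBQ HL.
  assert (Hsn : 0 < sqrt n) by now apply sqrt_lt_R0.
  assert (Hr := sqrt_pos (L / (n * (dd * B ^ 2)))).
  assert (Hs := sqrt_pos (dd * l)).
  apply Rsqr_incr_0_var.
  2: { apply Rmult_le_pos; [apply Rmult_le_pos; [lra|exact Hs]|].
       left; apply Rinv_0_lt_compat, Rmult_lt_0_compat; assumption. }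
  unfold Rsqr.
  replace (5 * sqrt (L / (n * (dd * B ^ 2))) * (dd * B ^ 2) *
           (5 * sqrt (L / (n * (dd * B ^ 2))) * (dd * B ^ 2)))
    with (25 * (dd * B ^ 2) ^ 2 * (sqrt (L / (n * (dd * B ^ 2))) * sqrt (L / (n * (dd * B ^ 2)))))
    by ring.
  replace (30 * sqrt (dd * l) / (Q * sqrt n) * (30 * sqrt (dd * l) / (Q * sqrt n)))
    with (900 * (sqrt (dd * l) * sqrt (dd * l)) / (Q ^ 2 * (sqrt n * sqrt n))) by (field; lra).
  assert (HV : 0 < n * (dd * B ^ 2)) by (apply Rmult_lt_0_compat; nra).
  rewrite !sqrt_sqrt by (try (apply Rlt_le, Rdiv_lt_0_compat; [lra|exact HV]); nra).
  assert (HQn : 0 < Q ^ 2 * n) by (apply Rmult_lt_0_compat; [apply pow_lt|]; assumption).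
  apply Rmult_le_reg_r with (Q ^ 2 * n); [exact HQn|].
  replace (25 * (dd * B ^ 2) ^ 2 * (L / (n * (dd * B ^ 2))) * (Q ^ 2 * n))
    with (25 * dd * L * (B * Q) ^ 2) by (field; split; lra).
  replace (900 * (dd * l) / (Q ^ 2 * n) * (Q ^ 2 * n)) with (900 * dd * l) by (field; lra).
  assert (0 <= B * Q) by nra.
  assert ((B * Q) ^ 2 <= 16) by nra.
  assert (25 * dd * L * (B * Q) ^ 2 <= 25 * dd * L * 16) by (apply Rmult_le_compat_l; nra).
  nra.
Qed.

(* Choice of the Chernoff parameter lam = sqrt(L/(N V))/4 with L = ln(2d/beta):
   it satisfies the side condition of alg3_mgf (this uses N >= d L) and makes
   the union bound at most 2 d e^{L/8 - 5L/4} <= 2 d e^{-L} = beta. *)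
Lemma chernoff_parameter d N eps delta beta :
  (1 <= d)%nat -> (1 <= N)%nat -> 0 < eps <= 1 -> 0 <= delta <= 1 -> 0 < beta <= 1 / 2 ->
  INR N >= INR d * ln (2 * INR d / beta) ->
  exists lam, 0 < lam /\
    Rabs lam * (2 * (INR d * alg2_B eps delta)) <= 1 / 2 /\
    2 * INR d * exp (INR N * (2 * lam ^ 2 * (INR d * alg2_B eps delta ^ 2)))
      * exp (- (lam * INR N * (30 * sqrt (INR d * ln (INR d / beta))
                                 / ((eps + 2 * delta) * sqrt (INR N)))))
    <= beta.
Proof.
  intros Hd HN Heps Hdel Hbeta HNL.
  assert (Hdr : 1 <= INR d) by (apply (le_INR 1); lia).
  assert (HNr : 1 <= INR N) by (apply (le_INR 1); lia).
  assert (HB := alg2_B_ge_1 eps delta ltac:(lra) Hdel).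
  set (B := alg2_B eps delta) in *.
  set (V := INR d * B ^ 2).
  assert (HV : 1 <= V) by (unfold V; nra).
  set (L := ln (2 * INR d / beta)) in *.
  set (l := ln (INR d / beta)).
  assert (HL : 0 < L <= 2 * l).
  { assert (Hdb : 2 <= INR d / beta).
    { apply Rmult_le_reg_r with beta; [lra|].
      unfold Rdiv; rewrite Rmult_assoc, Rinv_l by lra; lra. }
    assert (HL2 : L = ln 2 + l)
      by (unfold L, l; rewrite <- ln_mult by lra; f_equal; field; lra).
    assert (ln 2 <= l) by (apply ln_le_mono; lra).
    assert (Hln2 := ln_lt_2); lra. }
  set (r := sqrt (L / (INR N * V))).
  assert (Hr2 : r * r = L / (INR N * V)) by (apply sqrt_sqrt, Rlt_le, Rdiv_lt_0_compat; nra).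
  assert (Hr : 0 < r) by (apply sqrt_lt_R0, Rdiv_lt_0_compat; nra).
  assert (HrV : INR N * r ^ 2 * V = L)
    by (replace (r ^ 2) with (r * r) by ring; rewrite Hr2; field; nra).
  set (tau := 30 * sqrt (INR d * l) / ((eps + 2 * delta) * sqrt (INR N))).
  assert (Htau : 5 * r * V <= tau)
    by (apply threshold_ge; try apply alg2_B_mul_le_4; lra).
  exists (r / 4); split; [lra|split].
  - rewrite Rabs_pos_eq by lra.
    assert (HrdB : (r * INR d * B) ^ 2 <= 1).
    { replace ((r * INR d * B) ^ 2) with (INR d * (INR N * r ^ 2 * V) / INR N)
        by (unfold V; field; lra).
      rewrite HrV; apply Rmult_le_reg_r with (INR N); [lra|].
      unfold Rdiv; rewrite Rmult_assoc, Rinv_l by lra; lra. }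
    assert (0 <= r * INR d * B) by (apply Rmult_le_pos; nra).
    nra.
  - assert (Hexp : INR N * (2 * (r / 4) ^ 2 * V) - r / 4 * INR N * tau <= - L).
    { assert (Hlt : r / 4 * INR N * (5 * r * V) <= r / 4 * INR N * tau)
        by (apply Rmult_le_compat_l; nra).
      replace (INR N * (2 * (r / 4) ^ 2 * V)) with (L / 8) by (rewrite <- HrV; field).
      replace (r / 4 * INR N * (5 * r * V)) with (5 / 4 * L) in Hlt by (rewrite <- HrV; field).
      lra. }
    rewrite Rmult_assoc, <- exp_plus.
    apply Rle_trans with (2 * INR d * exp (- L));
      [apply Rmult_le_compat_l; [lra|apply exp_le_mono; lra]|].
    unfold L; rewrite exp_Ropp, exp_ln by (apply Rdiv_lt_0_compat; lra).
    right; field; lra.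
Qed.

Theorem theorem4 :
  exists C : R, 0 < C /\
  forall (d N : nat) (eps delta beta : R) (x : nat -> nat -> R),
    (1 <= d)%nat -> (1 <= N)%nat ->
    0 < eps <= 1 -> 0 <= delta <= 1 -> 0 < beta <= 1 / 2 ->
    INR N >= INR d * ln (2 * INR d / beta) ->
    (forall i j, (i < N)%nat -> (j < d)%nat -> -1 <= x i j <= 1) ->
    Pr (prodN N (fun i => alg3 eps delta (kpar eps d) d (x i)))
       (fun outs =>
          if Rle_dec (maxdev d N x outs)
                     (C * sqrt (INR d * ln (INR d / beta))
                        / ((eps + 2 * delta) * sqrt (INR N)))
          then true else false)
    >= 1 - beta.
Proof.
  exists 30; split; [lra|].
  intros d N eps delta beta x Hd HN Heps Hdel Hbeta HNL Hx.
  rewrite kpar_1 by exact Heps.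
  destruct (chernoff_parameter d N eps delta beta Hd HN Heps Hdel Hbeta HNL)
    as [lam [Hlam [Hsmall Hbound]]].
  assert (HNr : 1 <= INR N) by (apply (le_INR 1); lia).
  assert (Htau : 0 <= 30 * sqrt (INR d * ln (INR d / beta)) / ((eps + 2 * delta) * sqrt (INR N))).
  { apply Rmult_le_pos; [apply Rmult_le_pos; [lra|apply sqrt_pos]|].
    left; apply Rinv_0_lt_compat, Rmult_lt_0_compat; [lra|apply sqrt_lt_R0; lra]. }
  eapply Rge_trans; [|apply Rle_ge, Rplus_le_compat_l, Ropp_le_contravar, Hbound].
  apply (union_chernoff _ (fun outs j => Zj N outs j - Xj N x j));
    [| |apply Rmult_lt_0_compat; lra|exact Htau|].
  - apply supp_prodN; intros i Hi.
    refine (supp_weaken _ _ _ _ (supp_alg3 _ _ _ _ (proj1 Heps) Hdel _)); [easy|].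
    intros; apply Hx; assumption.
  - apply prodN_mass; intros; apply alg3_mass, Hd.
  - intros j Hj; split.
    + apply deviation_mgf; auto; lra.
    + rewrite (E_ext _ _ (fun outs => exp (- lam * INR N * (Zj N outs j - Xj N x j))))
        by (intro; f_equal; ring).
      replace (lam ^ 2) with ((- lam) ^ 2) by ring.
      apply deviation_mgf; auto; [lra|now rewrite Rabs_Ropp].
Qed.
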